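(* Let $M'\in\mathbb{R}^{n\times m}$ and let $\mathcal{M}\subseteq\mathcal{Q}(M')$ be such that for every $M\in\mathcal{M}$ the DSR graph $G_{M,M^t}$ is steady. Then for any $A,B^t\in\overline{\mathcal{M}}$ (the closure of $\mathcal{M}$), the matrix $AB$ is a $P_0$-matrix.
   Context: For $M\in\mathbb{R}^{n\times m}$, the qualitative class $\mathcal{Q}(M)$ is the set of real $n\times m$ matrices with the same entrywise sign pattern (signs in $\{-,0,+\}$) as $M$. A square real matrix is a $P_0$-matrix if all principal minors are nonnegative. DSR graphs: for $A\in\mathbb{R}^{n\times m}$, $B\in\mathbb{R}^{m\times n}$, $G_{A,B}$ is the signed, labelled bipartite digraph with S-vertices $S_1,\dots,S_n$ and R-vertices $R_1,\dots,R_m$, with an arc $R_j\to S_i$ of sign $\mathrm{sign}(A_{ij})$ iff $A_{ij}\ne0$ and an arc $S_i\to R_j$ of sign $\mathrm{sign}(B_{ji})$ iff $B_{ji}\ne0$; a pair of antiparallel arcs of the same sign is regarded as a single undirected edge. An edge arising from $A_{ij}\ne0$ (R-to-S or undirected) has label $|A_{ij}|$; an edge with only S-to-R orientation has label $\infty$. A cycle is a nonempty closed walk (traversing edges consistently with orientation) repeating no vertex except first$=$last. A cycle $(e_1,\dots,e_{2r})$ is an s-cycle if all labels are finite and $\prod_{i=1}^r l(e_{2i-1})=\prod_{i=1}^r l(e_{2i})$. $G_{A,B}$ is steady if all of its cycles are s-cycles. *)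

From HB Require Import structures.
From mathcomp Require Import all_boot all_order all_algebra.
From mathcomp Require Import reals.
Set Implicit Arguments. Unset Strict Implicit. Unset Printing Implicit Defensive.
Import Order.TTheory GRing.Theory Num.Theory.
Local Open Scope ring_scope.

Section DSR.
Variable R : realType.

Definition qual_class (n m : nat) (M' M : 'M[R]_(n, m)) : Prop :=
  forall i j, Num.sg (M i j) = Num.sg (M' i j).

Definition principal_submx (n : nat) (M : 'M[R]_n) (I : {set 'I_n}) : 'M[R]_#|I| :=
  \matrix_(a < #|I|, b < #|I|) M (enum_val a) (enum_val b).

Definition P0_matrix (n : nat) (M : 'M[R]_n) : Prop :=
  forall I : {set 'I_n}, 0 <= \det (principal_submx M I).

Definition in_closure (n m : nat) (S : 'M[R]_(n, m) -> Prop) (A : 'M[R]_(n, m)) : Prop :=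
  forall e : R, 0 < e -> exists M, S M /\ forall i j, `|A i j - M i j| < e.

(** Vertices: S_i = inl i, R_j = inr j.
    Edges between S_i and R_j are of three kinds:
    - [Und]  : undirected edge (antiparallel arcs of the same sign), label |A_ij|;
    - [ArcRS]: arc R_j -> S_i only (not merged), label |A_ij|;
    - [ArcSR]: arc S_i -> R_j only (not merged), label infinity. *)
Inductive ekind := Und | ArcRS | ArcSR.

Definition merged (n m : nat) (A : 'M[R]_(n, m)) (B : 'M[R]_(m, n)) i j : bool :=
  [&& A i j != 0, B j i != 0 & Num.sg (A i j) == Num.sg (B j i)].

Definition dsr_edge (n m : nat) (A : 'M[R]_(n, m)) (B : 'M[R]_(m, n))
    (i : 'I_n) (j : 'I_m) (k : ekind) : bool :=
  match k with
  | Und => merged A B i j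
  | ArcRS => (A i j != 0) && ~~ merged A B i j
  | ArcSR => (B j i != 0) && ~~ merged A B i j
  end.

Record step (n m : nat) := Step { st_i : 'I_n; st_j : 'I_m; st_k : ekind; st_d : bool }.

Definition step_ok n m (s : step n m) : bool :=
  match st_k s with Und => true | ArcRS => ~~ st_d s | ArcSR => st_d s end.

Definition st_start n m (s : step n m) : 'I_n + 'I_m :=
  if st_d s then inl (st_i s) else inr (st_j s).
Definition st_end n m (s : step n m) : 'I_n + 'I_m :=
  if st_d s then inr (st_j s) else inl (st_i s).

Definition dsr_cycle (n m : nat) (A : 'M[R]_(n, m)) (B : 'M[R]_(m, n))
    (c : seq (step n m)) : Prop :=
  [/\ (0 < size c)%N,
      all (fun s => dsr_edge A B (st_i s) (st_j s) (st_k s) && step_ok s) c,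
      cycle (fun s t => st_end s == st_start t) c
    & uniq (map (@st_start n m) c)].

(** Labels: [None] stands for infinity. *)
Definition st_label n m (A : 'M[R]_(n, m)) (s : step n m) : option R :=
  match st_k s with ArcSR => None | _ => Some `|A (st_i s) (st_j s)| end.

(** s-cycle (e_1,...,e_{2r}): all labels finite and
    prod l(e_odd) = prod l(e_even).  Positions are 0-based below. *)
Definition s_cycle (n m : nat) (A : 'M[R]_(n, m)) (c : seq (step n m)) : Prop :=
  all (fun s => st_label A s != None) c /\
  let ls := map (fun s => odflt 0 (st_label A s)) c in
  \prod_(t < size ls | ~~ odd t) ls`_t = \prod_(t < size ls | odd t) ls`_t.

Definition steady (n m : nat) (A : 'M[R]_(n, m)) (B : 'M[R]_(m, n)) : Prop :=
  forall c : seq (step n m), dsr_cycle A B c -> s_cycle A c.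

End DSR.

From HB Require Import structures.
From mathcomp Require Import all_boot all_order all_algebra perm.
From mathcomp Require Import boolp classical_sets reals interval_inference.
From mathcomp Require Import topology normedtype.
Set Implicit Arguments. Unset Strict Implicit. Unset Printing Implicit Defensive.
Import Order.TTheory GRing.Theory Num.Theory.
Import numFieldNormedType.Exports.
Local Open Scope classical_set_scope.
Local Open Scope ring_scope.

(* By a Cauchy-Binet type expansion, k! times a principal minor of A B is a sum
   of products det A[I, f] * det B^T[I, f] over maps f from I to the columns.
   For a matrix M with G_{M,M^T} steady, all nonzero terms of the Leibniz
   expansion of a minor of M have the same absolute value: two such terms
   differ by a permutation whose cycles give cycles of G_{M,M^T} alternating
   between the entries used by either term, and the s-cycle condition equates
   the two products along each of them.  So every minor of M is a nonnegative
   multiple of the same minor of the sign pattern of M, which is shared by the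
   whole family; the products above are therefore nonnegative, and remain so
   on the closure by continuity of minors. *)

Section CauchyBinet.
Variables (R : comPzRingType) (k m : nat) (P : 'M[R]_(k, m)) (Q : 'M[R]_(m, k)).

Lemma det_mulmx_ffun : \det (P *m Q) =
  \sum_(f : {ffun 'I_k -> 'I_m}) (\prod_i P i (f i)) * \det (\matrix_(i, j) Q (f i) j).
Proof.
under [RHS]eq_bigr do rewrite big_distrr.
rewrite exchange_big; apply: eq_bigr => s _ /=.
under [RHS]eq_bigr do rewrite mulrCA.
rewrite -big_distrr; congr (_ * _).
under eq_bigr do rewrite mxE.
rewrite bigA_distr_bigA /=; apply: eq_bigr => f _.
by rewrite -big_split; apply: eq_bigr => i _; rewrite mxE.
Qed.

(* Averaging [det_mulmx_ffun] over the reindexings [f \o t], [t : 'S_k], turns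
   the product [\prod_i P i (f i)] into a minor of [P]. *)
Lemma det_mulmx_mulrn_fact : \det (P *m Q) *+ k`! =
  \sum_(f : {ffun 'I_k -> 'I_m})
     \det (\matrix_(i, j) P i (f j)) * \det (\matrix_(i, j) Q (f i) j).
Proof.
pose Qf (f : {ffun 'I_k -> 'I_m}) := \matrix_(i, j) Q (f i) j.
have Qf_perm (f : {ffun 'I_k -> 'I_m}) (t : 'S_k) :
    \det (Qf [ffun i => f (t i)]) = (-1) ^+ t * \det (Qf f).
  rewrite -det_perm -det_mulmx -row_permE; congr (\det _).
  by apply/matrixP => i j; rewrite !mxE ffunE.
have reindex_perm_ffun (t : 'S_k) (F : {ffun 'I_k -> 'I_m} -> R) :
    \sum_f F f = \sum_(f : {ffun 'I_k -> 'I_m}) F [ffun i => f (t i)].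
  apply: reindex_inj => f1 f2 /ffunP eq12; apply/ffunP => i.
  by have := eq12 (t^-1 i)%g; rewrite !ffunE permKV.
rewrite -card_Sn -sumr_const.
under eq_bigr => t _ do rewrite det_mulmx_ffun (reindex_perm_ffun t) /=.
rewrite exchange_big; apply: eq_bigr => f _ /=.
rewrite /Qf big_distrl /=; apply: eq_bigr => t _.
rewrite Qf_perm mulrA [_ * (-1) ^+ t]mulrC.
by congr (_ * _ * _); apply: eq_bigr => i _; rewrite !mxE ffunE.
Qed.
End CauchyBinet.

Section AlternatingProducts.
Variable R : pzSemiRingType.

Lemma prod_even_cons2 (x y : R) s :
  \prod_(t < size [:: x, y & s] | ~~ odd t) [:: x, y & s]`_t =
  x * \prod_(t < size s | ~~ odd t) s`_t.
Proof.
rewrite big_mkcond !big_ord_recl /= mul1r [in RHS]big_mkcond.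
by congr (_ * _); apply: eq_bigr => i _; rewrite add0n negbK.
Qed.

Lemma prod_odd_cons2 (x y : R) s :
  \prod_(t < size [:: x, y & s] | odd t) [:: x, y & s]`_t =
  y * \prod_(t < size s | odd t) s`_t.
Proof.
rewrite big_mkcond !big_ord_recl /= mul1r [in RHS]big_mkcond.
by congr (_ * _); apply: eq_bigr => i _; rewrite add0n negbK.
Qed.

Variables (T : Type) (f1 f2 : T -> R).

Lemma prod_even_interleave s :
  let ls := flatten [seq [:: f1 x; f2 x] | x <- s] in
  \prod_(t < size ls | ~~ odd t) ls`_t = \prod_(x <- s) f1 x.
Proof.
by elim: s => [|x s IH] /=; rewrite ?big_ord0 ?big_nil // prod_even_cons2 IH big_cons.
Qed.

Lemma prod_odd_interleave s :
  let ls := flatten [seq [:: f1 x; f2 x] | x <- s] in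
  \prod_(t < size ls | odd t) ls`_t = \prod_(x <- s) f2 x.
Proof.
by elim: s => [|x s IH] /=; rewrite ?big_ord0 ?big_nil // prod_odd_cons2 IH big_cons.
Qed.
End AlternatingProducts.

Section OrbitProducts.
Variables (R : comPzSemiRingType) (k : nat) (rho : 'S_k) (a0 : 'I_k).

Lemma prod_traject_porbit (F : 'I_k -> R) :
  \prod_(a <- traject rho a0 #|porbit rho a0|) F a = \prod_(a in porbit rho a0) F a.
Proof.
by rewrite big_uniq ?uniq_traject_porbit //; apply: eq_bigl => a; rewrite porbit_traject.
Qed.

Lemma mem_porbit_perm a : (rho a \in porbit rho a0) = (a \in porbit rho a0).
Proof. by rewrite -!eq_porbit_mem; have := porbit_perm rho 1 a; rewrite expg1 => ->. Qed.

Lemma prod_porbit_perm (F : 'I_k -> R) :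
  \prod_(a in porbit rho a0) F (rho a) = \prod_(a in porbit rho a0) F a.
Proof.
rewrite [RHS](reindex_inj (@perm_inj _ rho)); apply: eq_bigl => a.
by rewrite mem_porbit_perm.
Qed.
End OrbitProducts.

Lemma uniq_interleave (T U : eqType) (f1 f2 : T -> U) (s : seq T) :
  uniq (flatten [seq [:: f1 x; f2 x] | x <- s]) = uniq (map f1 s ++ map f2 s).
Proof.
apply: perm_uniq; elim: s => //= x s IH.
by rewrite perm_cons perm_sym -[f2 x :: _]cat1s perm_catCA /= perm_cons perm_sym.
Qed.

Lemma merged_trmx (R : realType) n m (M : 'M[R]_(n, m)) i j :
  merged M M^T i j = (M i j != 0).
Proof. by rewrite /merged mxE eqxx andbT andbb. Qed.

Lemma card_porbitS (T : finType) (s : {perm T}) x :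
  #|porbit s x| = #|porbit s x|.-1.+1.
Proof. by rewrite prednK // lt0n card_porbit_neq0. Qed.

Section OrbitWalk.
Variables (R : realType) (n m k : nat) (M : 'M[R]_(n, m)).
Variables (r : 'I_k -> 'I_n) (g : 'I_k -> 'I_m) (rho : 'S_k).

(* Along the cycle (a0, rho a0, ...) of [rho], the walk
   S_(r a) -> R_(g (rho a)) -> S_(r (rho a)) -> ... of G_{M,M^T}; its even
   steps use the entries of [M] selected by [rho], its odd steps those selected
   by the identity. *)
Definition orbit_steps (a : 'I_k) : seq (step n m) :=
  [:: Step (r a) (g (rho a)) Und true; Step (r (rho a)) (g (rho a)) Und false].

Definition orbit_walk (a0 : 'I_k) : seq (step n m) :=
  flatten [seq orbit_steps a | a <- traject rho a0 #|porbit rho a0|].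

Local Notation adjacent := (fun s t : step n m => st_end s == st_start t).

Lemma path_orbit_steps (x : step n m) a L : st_end x = inl (r a) ->
  path adjacent x (flatten [seq orbit_steps b | b <- traject rho a L]).
Proof. by elim: L x a => // L IH x a /= ->; rewrite !eqxx; apply: IH. Qed.

Lemma cycle_orbit_walk a0 : cycle adjacent (orbit_walk a0).
Proof.
have cardL := card_porbitS rho a0; set L := _.-1 in cardL.
have rho_last : rho (iter L rho a0) = a0 by rewrite -iterS -cardL iter_porbit.
set x := Step (r a0) (g a0) Und true.
have end_last : st_end (last x (orbit_walk a0)) = inl (r a0).
  rewrite /orbit_walk cardL trajectSr map_rcons -cats1 flatten_cat last_cat /=.
  by rewrite rho_last.
by rewrite (cycle_path x); apply: path_orbit_steps.
Qed.

Lemma s_cycle_orbit_walk a0 : s_cycle M (orbit_walk a0) ->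
  \prod_(a in porbit rho a0) `|M (r a) (g (rho a))| =
  \prod_(a in porbit rho a0) `|M (r (rho a)) (g (rho a))|.
Proof.
case=> _ /=.
have -> : [seq odflt 0 (st_label M s) | s <- orbit_walk a0] =
    flatten [seq [:: `|M (r a) (g (rho a))|; `|M (r (rho a)) (g (rho a))|]
            | a <- traject rho a0 #|porbit rho a0|].
  by rewrite /orbit_walk map_flatten -map_comp.
by rewrite prod_even_interleave prod_odd_interleave !prod_traject_porbit.
Qed.

Hypotheses (r_inj : injective r) (g_inj : injective g).

Lemma uniq_orbit_walk a0 : uniq (map (@st_start n m) (orbit_walk a0)).
Proof.
rewrite /orbit_walk map_flatten -map_comp uniq_interleave cat_uniq.
have t_uniq := uniq_traject_porbit rho a0.
rewrite !map_inj_uniq //=; last by move=> a b [] /r_inj.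
  by rewrite t_uniq andbT; apply/hasPn => _ /mapP[a _ ->]; apply/mapP => -[].
by move=> a b [] /g_inj /perm_inj.
Qed.

Hypotheses (M_diag : forall a, M (r a) (g a) != 0)
           (M_rho : forall a, M (r a) (g (rho a)) != 0).

Lemma dsr_cycle_orbit_walk a0 : dsr_cycle M M^T (orbit_walk a0).
Proof.
split; [|rewrite /orbit_walk|exact: cycle_orbit_walk|exact: uniq_orbit_walk].
- by rewrite /orbit_walk card_porbitS.
- by elim: (traject _ _ _) => //= a t ->; rewrite !merged_trmx M_rho M_diag.
Qed.

Hypothesis steadyM : steady M M^T.

Lemma steady_prod_porbit a0 :
  \prod_(a in porbit rho a0) `|M (r a) (g (rho a))| =
  \prod_(a in porbit rho a0) `|M (r a) (g a)|.
Proof.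
rewrite (s_cycle_orbit_walk (steadyM (dsr_cycle_orbit_walk a0))).
exact: (prod_porbit_perm rho a0 (fun a => `|M (r a) (g a)|)).
Qed.

Lemma steady_prod_perm :
  \prod_a `|M (r a) (g (rho a))| = \prod_a `|M (r a) (g a)|.
Proof.
rewrite !(partition_big_imset (porbit rho)) /=.
apply: eq_bigr => _ /imsetP[a0 _ ->].
rewrite !(eq_bigl _ _ (eq_porbit_mem rho ^~ a0)).
exact: steady_prod_porbit.
Qed.
End OrbitWalk.

Definition minor (R : pzRingType) n m k (X : 'M[R]_(n, m))
    (r : 'I_k -> 'I_n) (f : 'I_k -> 'I_m) : R :=
  \det (\matrix_(a, b) X (r a) (f b)).

Lemma minorE (R : pzRingType) n m k (X : 'M[R]_(n, m)) r (f : 'I_k -> 'I_m) :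
  minor X r f = \sum_(s : 'S_k) (-1) ^+ s * \prod_a X (r a) (f (s a)).
Proof. by apply: eq_bigr => s _; congr (_ * _); apply: eq_bigr => a _; rewrite mxE. Qed.

Lemma minor_eq0 (R : comPzRingType) n m k (X : 'M[R]_(n, m)) r (f : 'I_k -> 'I_m) :
  ~~ (injectiveb r && injectiveb f) -> minor X r f = 0.
Proof.
case/nandP => /injectivePn[a1 [a2 a12 eq_a12]].
  by apply: determinant_alternate a12 _ => b; rewrite !mxE eq_a12.
by rewrite /minor -det_tr; apply: determinant_alternate a12 _ => b; rewrite !mxE eq_a12.
Qed.

Section SteadyMinor.
Variables (R : realType) (n m k : nat) (M : 'M[R]_(n, m)).
Variables (r : 'I_k -> 'I_n) (f : 'I_k -> 'I_m).
Hypothesis steadyM : steady M M^T.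

Lemma steady_prod_abs_eq (s1 s2 : 'S_k) : injective r -> injective f ->
    (forall a, M (r a) (f (s1 a)) != 0) -> (forall a, M (r a) (f (s2 a)) != 0) ->
  \prod_a `|M (r a) (f (s2 a))| = \prod_a `|M (r a) (f (s1 a))|.
Proof.
move=> r_inj f_inj nz1 nz2.
have fs1_inj : injective (fun a => f (s1 a)) by move=> a b /f_inj /perm_inj.
have nz12 a : M (r a) (f (s1 ((s2 * s1^-1)%g a))) != 0 by rewrite permM permKV.
rewrite -(steady_prod_perm r_inj fs1_inj nz1 nz12 steadyM).
by apply: eq_bigr => a _; rewrite permM permKV.
Qed.

Lemma steady_minor_sg :
  exists2 c, 0 <= c & minor M r f = c * minor (map_mx Num.sg M) r f.
Proof.
have [/andP[/injectiveP r_inj /injectiveP f_inj] | noninj] :=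
  boolP (injectiveb r && injectiveb f); last first.
  by exists 0; rewrite // mul0r minor_eq0.
pose nz (s : 'S_k) := [forall a, M (r a) (f (s a)) != 0].
(* [c] is the common absolute value of the nonzero Leibniz terms. *)
pose c := if [pick s | nz s] is Some s0 then \prod_a `|M (r a) (f (s0 a))| else 0.
exists c; first by rewrite /c; case: pickP => // s0 _; apply: prodr_ge0.
rewrite !minorE big_distrr; apply: eq_bigr => s _ /=; rewrite mulrCA; congr (_ * _).
under [in RHS]eq_bigr do rewrite mxE.
have [nz_s | /forallPn[a /negPn/eqP Ma0]] := boolP (nz s); last first.
  by rewrite (bigD1 a) //= Ma0 mul0r [X in _ * X](bigD1 a) //= Ma0 sgr0 mul0r mulr0.
rewrite (eq_bigr _ (fun a _ => numEsg (M (r a) (f (s a))))) big_split /= mulrC.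
congr (_ * _); rewrite /c; case: pickP => [s0 nz_s0 | /(_ s)]; last by rewrite nz_s.
by apply: steady_prod_abs_eq => // a; [move/forallP: nz_s0 | move/forallP: nz_s].
Qed.
End SteadyMinor.

Lemma steady_minor_mul_ge0 (R : realType) n m k (M1 M2 : 'M[R]_(n, m))
    (r : 'I_k -> 'I_n) (f : 'I_k -> 'I_m) :
  steady M1 M1^T -> steady M2 M2^T -> map_mx Num.sg M1 = map_mx Num.sg M2 ->
  0 <= minor M1 r f * minor M2 r f.
Proof.
move=> /(steady_minor_sg r f)[c1 c1_ge0 ->] /(steady_minor_sg r f)[c2 c2_ge0 ->] ->.
by rewrite mulrACA; apply: mulr_ge0; [apply: mulr_ge0 | rewrite -expr2 sqr_ge0].
Qed.

Lemma cvg_det (R : numFieldType) (T : Type) (F : set_system T) {FF : Filter F} k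
    (u : T -> 'M[R]_k) (X : 'M[R]_k) :
  (forall i j, u x i j @[x --> F] --> X i j) -> \det (u x) @[x --> F] --> \det X.
Proof.
move=> cvg_u; apply: cvg_big => [|s _]; first exact: add_continuous.
apply: cvgMl_tmp; apply: cvg_big => [|a _]; [exact: mul_continuous | exact: cvg_u].
Qed.

Lemma cvg_minor (R : numFieldType) (T : Type) (F : set_system T) {FF : Filter F}
    n m k (u : T -> 'M[R]_(n, m)) (X : 'M[R]_(n, m))
    (r : 'I_k -> 'I_n) (f : 'I_k -> 'I_m) :
  (forall i j, u x i j @[x --> F] --> X i j) ->
  minor (u x) r f @[x --> F] --> minor X r f.
Proof.
move=> cvg_u; apply: cvg_det => a b; rewrite mxE.
by under eq_fun do rewrite mxE; apply: cvg_u.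
Qed.

Lemma in_closure_cvg (R : realType) n m (S : 'M[R]_(n, m) -> Prop) (X : 'M[R]_(n, m)) :
  in_closure S X ->
  exists2 u : nat -> 'M[R]_(n, m),
    forall p, S (u p) & forall i j, u p i j @[p --> \oo] --> X i j.
Proof.
move=> closSX.
have : forall p : nat, exists M, S M /\ forall i j, `|X i j - M i j| < p.+1%:R^-1.
  by move=> p; apply: closSX; rewrite invr_gt0 ltr0Sn.
case/choice => u Su; exists u => [p | i j]; first by case: (Su p).
apply/cvgrPdist_lt => e e_gt0.
apply: filterS (near_infty_natSinv_lt (PosNum e_gt0)) => p /=.
exact: lt_trans (proj2 (Su p) i j).
Qed.

Lemma qual_class_sg (R : realType) n m (M' M : 'M[R]_(n, m)) :
  qual_class M' M -> map_mx Num.sg M = map_mx Num.sg M'.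
Proof. by move=> QM; apply/matrixP => i j; rewrite !mxE. Qed.

Lemma closure_minor_mul_ge0 (R : realType) n m (M' : 'M[R]_(n, m))
    (MM : 'M[R]_(n, m) -> Prop) (hQ : forall M, MM M -> qual_class M' M)
    (hS : forall M, MM M -> steady M M^T) k (r : 'I_k -> 'I_n) (f : 'I_k -> 'I_m)
    (X Y : 'M[R]_(n, m)) :
  in_closure MM X -> in_closure MM Y -> 0 <= minor X r f * minor Y r f.
Proof.
move=> /in_closure_cvg[u MMu cvg_u] /in_closure_cvg[v MMv cvg_v].
have cvg_uv : minor (u p) r f * minor (v p) r f @[p --> \oo] -->
              minor X r f * minor Y r f.
  by apply: cvgM; apply: cvg_minor.
rewrite -(cvg_lim _ cvg_uv) //; apply: limr_ge; first exact: cvgP cvg_uv.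
apply: nearW => p; apply: steady_minor_mul_ge0; [exact: hS | exact: hS |].
by rewrite (qual_class_sg (hQ _ (MMu p))) (qual_class_sg (hQ _ (MMv p))).
Qed.

Theorem lemma2p8 (R : realType) (n m : nat) (M' : 'M[R]_(n, m))
    (MM : 'M[R]_(n, m) -> Prop)
    (hQ : forall M, MM M -> qual_class M' M)
    (hS : forall M, MM M -> steady M M^T)
    (A : 'M[R]_(n, m)) (B : 'M[R]_(m, n))
    (hA : in_closure MM A) (hB : in_closure MM B^T) :
  P0_matrix (A *m B).
Proof.
move=> I; pose e : 'I_#|I| -> 'I_n := enum_val.
set P := \matrix_(a, j) A (e a) j; set Q := \matrix_(j, b) B j (e b).
have -> : principal_submx (A *m B) I = P *m Q.
  by apply/matrixP => a b; rewrite !mxE; apply: eq_bigr => j _; rewrite !mxE.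
rewrite -(pmulrn_lge0 _ (fact_gt0 #|I|)) det_mulmx_mulrn_fact; apply: sumr_ge0 => f _.
have -> : \det (\matrix_(a, b) P a (f b)) = minor A e f.
  by congr (\det _); apply/matrixP => a b; rewrite !mxE.
have -> : \det (\matrix_(a, b) Q (f a) b) = minor B^T e f.
  by rewrite /minor -det_tr; congr (\det _); apply/matrixP => a b; rewrite !mxE.
exact: (closure_minor_mul_ge0 hQ hS e f hA hB).
Qed.
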